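(* For every integer $n>1$, the set $H_n$ consists of $4n+1$ polynomials, each of total degree at most $\max(n,2)$ and with all coefficients in $\{0,\pm1\}$ and at most $4$ terms, and $H_n$ contains $S_n$ (so $(H_n)$ corresponds to an ideal of the Boolean ring $R_n/(S_n)$); yet for every admissible total-degree monomial ordering, every Gröbner basis of the ideal $(H_n)$ has at least $6n+3^n$ elements. Consequently the size of Gröbner bases of ideals in the Boolean rings $R_n/(S_n)$ is not bounded by any polynomial in the number, degrees and bitsizes of the input generators.
   Context: Let $R_n=\mathbb{F}_2[x_1,\ldots,x_n,y_1,\ldots,y_n,z_1,\ldots,z_n]$ with $\mathbb{F}_2=\mathbb{Z}/(2)$. For $S\subseteq R_n$, $(S)$ denotes the ideal generated by $S$. A total-degree ordering is an admissible monomial ordering that first compares total degrees. Define $S_n=\{c^2-c : c\in\{x_1,\ldots,x_n,y_1,\ldots,y_n,z_1,\ldots,z_n\}\}$, $L_n=\{x_iy_i+x_i+y_i-z_i : i=1,\ldots,n\}$, and $H_n=S_n\cup L_n\cup\{z_1z_2\cdots z_n\}$. The quotient $R_n/(S_n)$ is a Boolean ring (every element $r$ satisfies $r^2=r$), and ideals of $R_n/(S_n)$ correspond bijectively to ideals of $R_n$ containing $S_n$; Gröbner bases in the Boolean ring are understood as Gröbner bases in $R_n$ of ideals containing $S_n$. *)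

From HB Require Import structures.
From mathcomp Require Import all_boot all_order all_algebra.
Set Implicit Arguments. Unset Strict Implicit. Unset Printing Implicit Defensive.
Import GRing.Theory.

Definition mon (k : nat) := {ffun 'I_k -> nat}.

Definition mone (k : nat) : mon k := [ffun _ => 0%N].
Definition madd (k : nat) (a b : mon k) : mon k := [ffun i => (a i + b i)%N].
Definition msub (k : nat) (a b : mon k) : mon k := [ffun i => (a i - b i)%N].
Definition mdeg (k : nat) (a : mon k) : nat := (\sum_(i < k) a i)%N.
Definition mdiv (k : nat) (a b : mon k) : bool := [forall i, (a i <= b i)%N].

Definition mpoly (k : nat) := mon k -> 'F_2.
Definition pzero (k : nat) : mpoly k := fun _ => 0%R.
Arguments pzero : clear implicits.

Definition psum (k : nat) (ts : seq (mon k)) : mpoly k :=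
  fun m => ((count_mem m ts)%:R)%R.

Definition pmulm (k : nat) (t : mon k) (p : mpoly k) : mpoly k :=
  fun m => if mdiv t m then p (msub m t) else 0%R.

Definition pin (k : nat) (p : mpoly k) (s : seq (mpoly k)) : Prop :=
  exists i : 'I_(size s), nth (pzero k) s i = p.

(* f lies in the ideal generated by S: over the field F_2, f is an F_2-linear
   combination (coefficients 0/1) of monomial multiples t * s of generators s in S *)
Definition in_ideal (k : nat) (S : seq (mpoly k)) (f : mpoly k) : Prop :=
  exists l : seq (mon k * 'I_(size S)),
    forall m, f m = (\sum_(pr <- l) pmulm pr.1 (nth (pzero k) S pr.2) m)%R.

(* admissible monomial ordering: a total order, compatible with multiplication,
   with 1 as least element (hence a well-order, by Dickson's lemma) *)
Definition admissible (k : nat) (le : rel (mon k)) : Prop :=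
  [/\ reflexive le, transitive le, antisymmetric le & total le] /\
  (forall a b c, le a b -> le (madd a c) (madd b c)) /\
  (forall a, le (mone k) a).

Definition total_degree (k : nat) (le : rel (mon k)) : Prop :=
  forall a b, (mdeg a < mdeg b)%N -> ~~ le b a.

Definition is_lm (k : nat) (le : rel (mon k)) (p : mpoly k) (m : mon k) : Prop :=
  p m != 0%R /\ forall m', p m' != 0%R -> le m' m.

Definition is_groebner (k : nat) (le : rel (mon k)) (F G : seq (mpoly k)) : Prop :=
  (forall g, pin g G -> in_ideal F g) /\
  (forall f, in_ideal F f -> forall m, is_lm le f m ->
     exists g m', [/\ pin g G, is_lm le g m' & mdiv m' m]).

Definition at_least (k : nat) (N : nat) (G : seq (mpoly k)) : Prop :=
  exists f : 'I_N -> mpoly k, injective f /\ forall i, pin (f i) G.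

Definition deg_le (k : nat) (p : mpoly k) (d : nat) : Prop :=
  forall m, p m != 0%R -> (mdeg m <= d)%N.

Definition terms_le (k : nat) (p : mpoly k) (N : nat) : Prop :=
  exists ts : seq (mon k), (size ts <= N)%N /\ forall m, p m != 0%R -> m \in ts.

(* variables indexed by 'I_(3*n): x_i -> i, y_i -> n+i, z_i -> 2n+i (i : 'I_n) *)
Definition mx (n : nat) (i : 'I_n) : mon (3 * n) :=
  [ffun j : 'I_(3 * n) => nat_of_bool (nat_of_ord j == nat_of_ord i)].
Definition my (n : nat) (i : 'I_n) : mon (3 * n) :=
  [ffun j : 'I_(3 * n) => nat_of_bool (nat_of_ord j == n + i)%N].
Definition mz (n : nat) (i : 'I_n) : mon (3 * n) :=
  [ffun j : 'I_(3 * n) => nat_of_bool (nat_of_ord j == 2 * n + i)%N].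

Definition vars (n : nat) : seq (mon (3 * n)) :=
  [seq mx i | i <- enum 'I_n] ++ [seq my i | i <- enum 'I_n]
    ++ [seq mz i | i <- enum 'I_n].

(* S_n = { c^2 - c } ; over F_2, c^2 - c = c^2 + c *)
Definition Sn (n : nat) : seq (mpoly (3 * n)) :=
  [seq psum [:: madd c c; c] | c <- vars n].

(* L_n = { x_i y_i + x_i + y_i - z_i } ; over F_2, - z_i = z_i *)
Definition Ln (n : nat) : seq (mpoly (3 * n)) :=
  [seq psum [:: madd (mx i) (my i); mx i; my i; mz i] | i <- enum 'I_n].

Definition zprod (n : nat) : mon (3 * n) := \big[@madd _ / mone _]_(i < n) mz i.

Definition Hn (n : nat) : seq (mpoly (3 * n)) :=
  Sn n ++ Ln n ++ [:: psum [:: zprod n]].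

From Stdlib Require Import ClassicalEpsilon.
From HB Require Import structures.
From mathcomp Require Import all_boot all_order all_algebra zify.
Set Implicit Arguments. Unset Strict Implicit. Unset Printing Implicit Defensive.
Import GRing.Theory.

(* Modulo S_n and L_n every z_i equals x_i OR y_i, so R_n/(S_n, L_n) has as basis the
   monomials taking at most one of x_i, y_i, z_i from each block. The coordinate along such
   a basis monomial m is an F_2-linear functional vanishing on S_n and L_n, and also on the
   multiples of z_1 ... z_n when m misses a whole block (z_i times a basis element of block i
   is never 1). For a total-degree order, any g in (H_n) with leading monomial m would have
   all its monomials of degree at most deg m, among which only m has a nonzero coordinate;
   the functional would then give g(m) = 0. So such m are never leading monomials.
   Now x_i^2, y_i^2, z_i^2, x_i y_i, x_i z_i, y_i z_i and the 3^n monomials picking one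
   variable per block are leading monomials of elements of (H_n), and all their proper
   divisors are of the excluded kind; hence a Groebner basis must contain an element with
   each of these 6n + 3^n leading monomials. *)

Section Monomials.
Variable k : nat.
Implicit Types a b c t m : mon k.

Definition munit (j : 'I_k) : mon k := [ffun j' => nat_of_bool (j' == j)].

Lemma maddC a b : madd a b = madd b a.
Proof. by apply/ffunP => j; rewrite !ffunE addnC. Qed.

Lemma madd_eqE t a m : (madd t a == m) = mdiv t m && (a == msub m t).
Proof.
apply/eqP/andP => [<-|[/forallP tm /eqP ->]].
  split; first by apply/forallP => j; rewrite ffunE leq_addr.
  by apply/eqP/ffunP => j; rewrite !ffunE addKn.
by apply/ffunP => j; rewrite !ffunE subnKC.
Qed.

Lemma mdeg_madd a b : mdeg (madd a b) = (mdeg a + mdeg b)%N.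
Proof. by rewrite /mdeg -big_split; apply: eq_bigr => j _; rewrite ffunE. Qed.

Lemma mdeg_mone : mdeg (mone k) = 0%N.
Proof. by rewrite /mdeg big1 // => j _; rewrite ffunE. Qed.

Lemma mdeg_munit j : mdeg (munit j) = 1%N.
Proof.
rewrite /mdeg (bigD1 j) //= big1 ?ffunE ?eqxx // => j' /negbTE j'j.
by rewrite ffunE j'j.
Qed.

End Monomials.

Section Polynomials.
Variable k : nat.
Implicit Types (a h t x y z : mon k) (L : seq (mon k)) (S : seq (mpoly k)).
Local Open Scope ring_scope.

Lemma F2_01 (x : 'F_2) : x = 0 \/ x = 1.
Proof. by case: x => [[|[|j]] lt_j2]; [left; apply/val_inj|right; apply/val_inj|]. Qed.

Lemma F2_addxx (x : 'F_2) : x + x = 0.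
Proof. exact: (addrr_pchar2 (pchar_Fp (isT : prime 2))). Qed.

Lemma psum_cons a L m : psum (a :: L) m = (a == m)%:R + psum L m.
Proof. by rewrite /psum /= natrD. Qed.

Lemma psum_cat L1 L2 m : psum (L1 ++ L2) m = psum L1 m + psum L2 m.
Proof. by rewrite /psum count_cat natrD. Qed.

Lemma psum_neq0_mem L m : psum L m != 0 -> m \in L.
Proof. by rewrite /psum -has_pred1 has_count; case: count; rewrite ?eqxx. Qed.

Lemma psum_head h L : (forall u, u \in L -> mdeg u < mdeg h)%N -> psum (h :: L) h = 1.
Proof.
move=> ltL; rewrite psum_cons eqxx /psum (count_memPn _) ?addr0 //.
by apply/negP => /ltL; rewrite ltnn.
Qed.

Lemma psum_head_inj (h1 h2 : mon k) L1 L2 :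
  (forall u, u \in L1 -> mdeg u < mdeg h1)%N -> (forall u, u \in L2 -> mdeg u < mdeg h2)%N ->
  psum (h1 :: L1) =1 psum (h2 :: L2) -> h1 = h2.
Proof.
move=> lt1 lt2 eq12.
have /psum_neq0_mem : psum (h2 :: L2) h1 != 0 by rewrite -eq12 psum_head ?oner_neq0.
have /psum_neq0_mem : psum (h1 :: L1) h2 != 0 by rewrite eq12 psum_head ?oner_neq0.
rewrite !inE => /predU1P [-> //|/lt1 lt21] /predU1P [-> //|/lt2 lt12].
by have := ltn_trans lt12 lt21; rewrite ltnn.
Qed.

Lemma pmulm_psum t L m : pmulm t (psum L) m = psum (map (madd t) L) m.
Proof.
rewrite /pmulm /psum count_map (eq_count (a2 := fun a => mdiv t m && (a == msub m t))).
  by case: (mdiv t m); rewrite // (eq_count (a2 := pred0)) ?count_pred0.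
by move=> a /=; rewrite madd_eqE.
Qed.

Lemma pmulm_mone (f : mpoly k) m : pmulm (mone k) f m = f m.
Proof.
rewrite /pmulm; have -> : mdiv (mone k) m by apply/forallP => j; rewrite ffunE.
by congr f; apply/ffunP => j; rewrite !ffunE subn0.
Qed.

Lemma pmulmA t s (f : mpoly k) m : pmulm (madd t s) f m = pmulm t (pmulm s f) m.
Proof.
rewrite /pmulm; case: (boolP (mdiv t m)) => [/forallP tm|tNm].
  have -> : mdiv (madd t s) m = mdiv s (msub m t).
    by apply/forallP/forallP => le_ts j; move: (le_ts j) (tm j); rewrite !ffunE;
      [rewrite leq_subRL | rewrite -leq_subRL].
  by case: ifP => // _; congr f; apply/ffunP => j; rewrite !ffunE subnDA.
case: ifP => // /forallP le_tsm; case/negP: tNm; apply/forallP => j.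
by move: (le_tsm j); rewrite ffunE; apply: leq_trans (leq_addr _ _).
Qed.

Lemma in_ideal_ext S (f g : mpoly k) : f =1 g -> in_ideal S g -> in_ideal S f.
Proof. by move=> fg [l gl]; exists l => m; rewrite fg gl. Qed.

Lemma in_ideal0 S : in_ideal S (pzero k).
Proof. by exists [::] => m; rewrite big_nil. Qed.

Lemma in_idealD S (f g : mpoly k) :
  in_ideal S f -> in_ideal S g -> in_ideal S (fun m => f m + g m).
Proof. by move=> [l1 fl1] [l2 gl2]; exists (l1 ++ l2) => m; rewrite big_cat fl1 gl2. Qed.

Lemma in_idealM S t (f : mpoly k) : in_ideal S f -> in_ideal S (pmulm t f).
Proof.
move=> [l fl]; exists [seq (madd t pr.1, pr.2) | pr <- l] => m.
rewrite big_map; under [RHS]eq_bigr => pr _ do rewrite pmulmA.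
by rewrite /pmulm; case: ifP => _; rewrite ?fl // big1.
Qed.

Lemma in_ideal_nth S (i : 'I_(size S)) : in_ideal S (nth (pzero k) S i).
Proof. by exists [:: (mone k, i)] => m; rewrite big_seq1 pmulm_mone. Qed.

(* x z + x = x (x y + x + y + z) + y (x^2 + x) + (x^2 + x) over F_2. *)
Lemma in_ideal_absorb S x y z :
  in_ideal S (psum [:: madd x y; x; y; z]) -> in_ideal S (psum [:: madd x x; x]) ->
  in_ideal S (psum [:: madd x z; x]).
Proof.
move=> Hxyz Hxx.
apply: in_ideal_ext (in_idealD (in_idealD (in_idealM x Hxyz) (in_idealM y Hxx)) Hxx) => m /=.
rewrite !pmulm_psum /= !psum_cons /psum /= addr0 [madd y x]maddC.
have -> : madd y (madd x x) = madd x (madd x y).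
  by apply/ffunP => j; rewrite !ffunE; lia.
move: (madd x z == m) (x == m) (madd x (madd x y) == m) (madd x x == m) (madd x y == m).
by do 5!case; apply/val_inj.
Qed.

End Polynomials.

Section LeadingMonomials.
Variables (k : nat) (le : rel (mon k)).

Lemma lm_unique (g : mpoly k) a b :
  antisymmetric le -> is_lm le g a -> is_lm le g b -> a = b.
Proof. by move=> anti [ga ga_max] [gb gb_max]; apply: anti; rewrite ga_max // gb_max. Qed.

Lemma lm_psum_cons h L : reflexive le -> total le -> total_degree le ->
  (forall u, u \in L -> mdeg u < mdeg h)%N -> is_lm le (psum (h :: L)) h.
Proof.
move=> refl tot tdeg ltL; split; first by rewrite psum_head ?oner_neq0.
move=> u /psum_neq0_mem; rewrite inE => /predU1P [-> //|/ltL /tdeg Nle_hu].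
by case/orP: (tot u h) => // le_hu; rewrite le_hu in Nle_hu.
Qed.

Lemma at_least_lms (G : seq (mpoly k)) (T : finType) (f : T -> mon k) :
  antisymmetric le -> injective f ->
  (forall t, exists g, pin g G /\ is_lm le g (f t)) -> at_least #|T| G.
Proof.
move=> anti f_inj lmG; pose gOf t := proj1_sig (constructive_indefinite_description _ (lmG t)).
have gOfP t : pin (gOf t) G /\ is_lm le (gOf t) (f t).
  exact: proj2_sig (constructive_indefinite_description _ (lmG t)).
exists (fun i => gOf (enum_val i)); split => [i j /= eq_ij|i]; last exact: (gOfP _).1.
have lm_j := (gOfP (enum_val j)).2; rewrite -eq_ij in lm_j.
exact/enum_val_inj/f_inj/(lm_unique anti (gOfP _).2 lm_j).
Qed.

Lemma groebner_lm_mem (F G : seq (mpoly k)) f m :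
  is_groebner le F G -> in_ideal F f -> is_lm le f m ->
  (forall m', mdiv m' m -> m' != m -> forall g, in_ideal F g -> ~ is_lm le g m') ->
  exists g, pin g G /\ is_lm le g m.
Proof.
move=> [G_sub G_lm] Ff lm_f no_lm; have [g [m' [Gg lm_g dvd]]] := G_lm f Ff m lm_f.
exists g; split => //; case: (eqVneq m' m) => [<- //|m'_neq].
by case: (no_lm m' dvd m'_neq g (G_sub g Gg) lm_g).
Qed.

End LeadingMonomials.

Section Annihilator.
Variables (k : nat) (hss : seq (seq (mon k))) (phi : mon k -> 'F_2).
Local Open Scope ring_scope.
Hypothesis phi_shift0 : forall hs t, hs \in hss -> \sum_(s <- hs) phi (madd t s) = 0.

Lemma in_ideal_annihilated (g : mpoly k) : in_ideal (map (@psum k) hss) g ->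
  exists L, g =1 psum L /\ \sum_(u <- L) phi u = 0.
Proof.
move=> [l gl]; set I := 'I_(size (map (@psum k) hss)) in l gl *.
have lt_hss (i : I) : (i < size hss)%N by rewrite -(size_map (@psum k)).
exists (flatten [seq map (madd pr.1) (nth [::] hss pr.2) | pr : mon k * I <- l]); split.
  move=> m; rewrite gl; elim: l {gl} => [|pr l IH]; first by rewrite big_nil /psum.
  by rewrite big_cons /= psum_cat IH (nth_map [::]) ?pmulm_psum.
rewrite big_flatten /= big_map big1 // => pr _.
by rewrite big_map phi_shift0 // mem_nth.
Qed.

Lemma sum_psum_weights (L : seq (mon k)) :
  \sum_(u <- L) phi u = \sum_(u <- undup L) psum L u * phi u.
Proof.
rewrite -big_undup_iterop_count; apply: eq_bigr => u _.
by rewrite Monoid.iteropE iter_addr_0 -mulr_natr mulrC.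
Qed.

Lemma not_lm_of_annihilator (le : rel (mon k)) (mt : mon k) :
  total_degree le -> phi mt = 1 ->
  (forall u, phi u != 0 -> (mdeg u <= mdeg mt)%N -> u = mt) ->
  forall g : mpoly k, in_ideal (map (@psum k) hss) g -> ~ is_lm le g mt.
Proof.
move=> tdeg phi_mt phi_supp g /in_ideal_annihilated [L [gL sum0]] [gmt lm_max].
have mt_L : mt \in undup L by rewrite mem_undup psum_neq0_mem // -gL.
move: sum0; rewrite sum_psum_weights (bigD1_seq mt) ?undup_uniq //= phi_mt mulr1 big1_seq.
  by rewrite addr0 -gL => gmt0; rewrite gmt0 eqxx in gmt.
move=> u /andP [u_neq _]; case: (F2_01 (phi u)) => [->|phi_u]; first by rewrite mulr0.
case: (F2_01 (psum L u)) => [->|Lu]; first by rewrite mul0r.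
have le_um : (mdeg u <= mdeg mt)%N.
  by rewrite leqNgt; apply/negP => /tdeg; rewrite lm_max // gL Lu oner_neq0.
by rewrite (phi_supp u) ?eqxx ?phi_u ?oner_neq0 in u_neq.
Qed.

End Annihilator.

Section Variables.
Variable n : nat.
Local Notation M := (mon (3 * n)).

Definition kx : 'I_3 := @Ordinal 3 0 isT.
Definition ky : 'I_3 := @Ordinal 3 1 isT.
Definition kz : 'I_3 := @Ordinal 3 2 isT.

Lemma I3_cases (c : 'I_3) : [\/ c = kx, c = ky | c = kz].
Proof.
by case: c => [[|[|[|j]]] lt_c3]; [apply: Or31|apply: Or32|apply: Or33|by []]; apply/val_inj.
Qed.

Lemma var_idx_proof (c : 'I_3) (i : 'I_n) : (c * n + i < 3 * n)%N.
Proof. have := ltn_ord c; have := ltn_ord i; nia. Qed.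

Definition var_idx (c : 'I_3) (i : 'I_n) : 'I_(3 * n) := Ordinal (var_idx_proof c i).
Definition mvar c i : M := munit (var_idx c i).
Definition expo (m : M) c i := m (var_idx c i).
Definition bdeg (m : M) i := (expo m kx i + expo m ky i + expo m kz i)%N.

Lemma var_idx_inj c i c' i' : var_idx c i = var_idx c' i' -> c = c' /\ i = i'.
Proof.
move=> /(congr1 val) /= eq_idx; have n_gt0 : (0 < n)%N by case: n i {eq_idx} => [[]|].
have := congr1 (divn^~ n) eq_idx; have := congr1 (modn^~ n) eq_idx => /=.
rewrite !modnMDl !modn_small // !divnMDl // !divn_small // !addn0 => eq_i eq_c.
by split; apply/val_inj.
Qed.

Lemma var_idx_surj (j : 'I_(3 * n)) : exists c i, j = var_idx c i.
Proof.
have n_gt0 : (0 < n)%N by case: n j => [[]|].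
have lt_c : (j %/ n < 3)%N by rewrite ltn_divLR.
have lt_i : (j %% n < n)%N by rewrite ltn_mod.
by exists (Ordinal lt_c), (Ordinal lt_i); apply/val_inj; rewrite /= -divn_eq.
Qed.

Lemma monP (a b : M) : (forall c i, expo a c i = expo b c i) -> a = b.
Proof. by move=> eq_ab; apply/ffunP => j; have [c [i ->]] := var_idx_surj j; apply: eq_ab. Qed.

Lemma mdivP (a b : M) : reflect (forall c i, expo a c i <= expo b c i)%N (mdiv a b).
Proof.
apply: (iffP forallP) => le_ab; first by move=> c i; apply: le_ab.
by move=> j; have [c [i ->]] := var_idx_surj j; apply: le_ab.
Qed.

Lemma expo_mvar c i c' i' : expo (mvar c' i') c i = ((c == c') && (i == i')).
Proof.
rewrite /expo ffunE; congr nat_of_bool.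
by apply/eqP/andP => [/var_idx_inj [-> ->]|[/eqP -> /eqP ->]].
Qed.

Lemma expo_madd a b c i : expo (madd a b) c i = (expo a c i + expo b c i)%N.
Proof. by rewrite /expo ffunE. Qed.

Lemma expo_big (I : Type) (r : seq I) (P : pred I) (F : I -> M) c i :
  expo (\big[@madd _/mone _]_(x <- r | P x) F x) c i = (\sum_(x <- r | P x) expo (F x) c i)%N.
Proof.
by apply: (big_morph (fun m => expo m c i)) => [a b|]; rewrite ?expo_madd // /expo ffunE.
Qed.

Lemma mdeg_bdeg (m : M) : mdeg m = (\sum_(i < n) bdeg m i)%N.
Proof.
have n_gt0 (j : 'I_(3 * n)) : (0 < n)%N by case: n j => [[]|].
have lt_c (j : 'I_(3 * n)) : (j %/ n < 3)%N by rewrite ltn_divLR ?n_gt0.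
have lt_i (j : 'I_(3 * n)) : (j %% n < n)%N by rewrite ltn_mod n_gt0.
rewrite /mdeg (reindex (fun p : 'I_3 * 'I_n => var_idx p.1 p.2)) /=; last first.
  exists (fun j => (Ordinal (lt_c j), Ordinal (lt_i j))) => [[c i] _|j _].
    have n0 := n_gt0 (var_idx c i).
    by congr pair; apply/val_inj; rewrite /= ?divnMDl ?divn_small ?addn0 ?modnMDl ?modn_small.
  by apply/val_inj; rewrite /= -divn_eq.
rewrite -(pair_big xpredT xpredT (fun c i => expo m c i)) /= exchange_big /=.
apply: eq_bigr => i _; rewrite !big_ord_recl big_ord0 addn0 addnA.
by congr (expo m _ i + expo m _ i + expo m _ i)%N; apply/val_inj.
Qed.

Lemma mvarE c i (j : 'I_(3 * n)) : mvar c i j = (val j == c * n + i)%N.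
Proof. by rewrite ffunE. Qed.

Lemma mx_mvar i : mx i = mvar kx i.
Proof. by apply/ffunP => j; rewrite [LHS]ffunE mvarE mul0n. Qed.
Lemma my_mvar i : my i = mvar ky i.
Proof. by apply/ffunP => j; rewrite [LHS]ffunE mvarE mul1n. Qed.
Lemma mz_mvar i : mz i = mvar kz i.
Proof. by apply/ffunP => j; rewrite [LHS]ffunE mvarE. Qed.

Lemma expo_zprod c i : expo (zprod n) c i = (c == kz).
Proof.
rewrite /zprod expo_big (bigD1 i) //= big1 ?addn0 => [|j /negbTE neq_ji].
  by rewrite mz_mvar expo_mvar eqxx andbT.
by rewrite mz_mvar expo_mvar [i == j]eq_sym neq_ji andbF.
Qed.

Lemma mdeg_zprod : mdeg (zprod n) = n.
Proof.
rewrite /zprod (big_morph (@mdeg _) (@mdeg_madd _) (mdeg_mone _)).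
by rewrite (eq_bigr (fun _ => 1%N)) ?sum1_card ?card_ord // => i _; rewrite mz_mvar mdeg_munit.
Qed.

End Variables.

Section Generators.
Variable n : nat.
Local Notation M := (mon (3 * n)).
Local Open Scope ring_scope.

Definition Hn_terms : seq (seq M) :=
  [seq [:: madd c c; c] | c <- vars n] ++
  [seq [:: madd (mx i) (my i); mx i; my i; mz i] | i <- enum 'I_n] ++ [:: [:: zprod n]].

Lemma Hn_psum : Hn n = map (@psum _) Hn_terms.
Proof. by rewrite /Hn /Hn_terms /Sn /Ln !map_cat -!map_comp. Qed.

Lemma size_Hn : size (Hn n) = (4 * n + 1)%N.
Proof. by rewrite /Hn /Sn /Ln /vars !(size_cat, size_map) -enumT size_enum_ord /=; lia. Qed.

Lemma in_ideal_Hn hs : hs \in Hn_terms -> in_ideal (Hn n) (psum hs).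
Proof.
move=> hs_in; have lt_hs : (index hs Hn_terms < size (Hn n))%N.
  by rewrite Hn_psum size_map index_mem.
apply: in_ideal_ext (in_ideal_nth (Ordinal lt_hs)) => m.
by rewrite /= Hn_psum (nth_map [::]) ?nth_index // index_mem.
Qed.

Lemma mvar_in_vars c i : mvar c i \in vars n.
Proof.
rewrite /vars !mem_cat; case: (I3_cases c) => ->;
  by rewrite -?mx_mvar -?my_mvar -?mz_mvar map_f ?orbT // mem_enum.
Qed.

Lemma Hn_termsP hs : hs \in Hn_terms ->
  [\/ exists c i, hs = [:: madd (mvar c i) (mvar c i); mvar c i],
      exists i, hs = [:: madd (mvar kx i) (mvar ky i); mvar kx i; mvar ky i; mvar kz i]
    | hs = [:: zprod n]].
Proof.
rewrite /Hn_terms !mem_cat => /or3P [/mapP [v v_in ->]|/mapP [i _ ->]|].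
- apply: Or31; move: v_in; rewrite /vars !mem_cat => /or3P [] /mapP [i _ ->].
  + by exists kx, i; rewrite mx_mvar.
  + by exists ky, i; rewrite my_mvar.
  + by exists kz, i; rewrite mz_mvar.
- by apply: Or32; exists i; rewrite mx_mvar my_mvar mz_mvar.
- by rewrite inE => /eqP ->; apply: Or33.
Qed.

Lemma in_ideal_sq c i : in_ideal (Hn n) (psum [:: madd (mvar c i) (mvar c i); mvar c i]).
Proof.
by apply: in_ideal_Hn; rewrite mem_cat (map_f (fun c => [:: madd c c; c])) ?mvar_in_vars.
Qed.

Lemma in_ideal_L i :
  in_ideal (Hn n) (psum [:: madd (mvar kx i) (mvar ky i); mvar kx i; mvar ky i; mvar kz i]).
Proof.
apply: in_ideal_Hn; rewrite !mem_cat -mx_mvar -my_mvar -mz_mvar; apply/or3P/Or32.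
by rewrite (map_f (fun i => [:: madd (mx i) (my i); mx i; my i; mz i])) ?mem_enum.
Qed.

Lemma in_ideal_zprod : in_ideal (Hn n) (psum [:: zprod n]).
Proof. by apply: in_ideal_Hn; rewrite !mem_cat mem_seq1 eqxx !orbT. Qed.

Lemma in_ideal_xz i : in_ideal (Hn n) (psum [:: madd (mvar kx i) (mvar kz i); mvar kx i]).
Proof. exact: in_ideal_absorb (in_ideal_L i) (in_ideal_sq kx i). Qed.

Lemma in_ideal_yz i : in_ideal (Hn n) (psum [:: madd (mvar ky i) (mvar kz i); mvar ky i]).
Proof.
apply: in_ideal_absorb (in_ideal_sq ky i).
apply: in_ideal_ext (in_ideal_L i) => m.
by rewrite !psum_cons maddC [X in _ + X = _]addrCA.
Qed.

End Generators.

(* Modulo S_n and L_n the i-th block contributes the basis 1, x_i, y_i, z_i, with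
   x_i y_i = x_i + y_i + z_i, x_i z_i = x_i and y_i z_i = y_i.
   [block_coord a b c px py pz] is the coordinate at x_i^a y_i^b z_i^c (a + b + c <= 1)
   of the product of the variables selected by px, py, pz. *)
Definition block_coord (a b c : nat) (px py pz : bool) : bool :=
  if (0 < a)%N then px else if (0 < b)%N then py else
  if (0 < c)%N then (pz && ~~ px && ~~ py) || (px && py)
  else ~~ px && ~~ py && ~~ pz.

Lemma block_coord_self a b c : (a + b + c <= 1)%N ->
  block_coord a b c (0 < a)%N (0 < b)%N (0 < c)%N.
Proof.
rewrite /block_coord => le_abc1; case: (ltnP 0 a) => // a0; case: (ltnP 0 b) => // b0.
by case: (ltnP 0 c) => c0 //=; rewrite andbT; apply/negP; lia.
Qed.

Lemma block_coord_support a b c x y z : (a + b + c <= 1)%N ->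
  block_coord a b c (0 < x)%N (0 < y)%N (0 < z)%N ->
  (a + b + c <= x + y + z)%N /\ ((x + y + z <= a + b + c)%N -> [/\ x = a, y = b & z = c]).
Proof.
rewrite /block_coord => le_abc1.
case: (ltnP 0 a) => a0; [|case: (ltnP 0 b) => b0; [|case: (ltnP 0 c) => c0]].
- by move=> x0; split => [|?]; [|split]; lia.
- by move=> y0; split => [|?]; [|split]; lia.
- by case/orP => [/andP [/andP [z0 x0] y0]|/andP [x0 y0]]; split => [|?]; try split; lia.
- by move=> /andP [/andP [x0 y0] z0]; split => [|?]; [|split]; lia.
Qed.

Lemma block_coord_L a b c px py pz :
  ((block_coord a b c true true pz)%:R + (block_coord a b c true py pz)%:R +
   (block_coord a b c px true pz)%:R + (block_coord a b c px py true)%:R : 'F_2)%R = 0%R.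
Proof.
by rewrite /block_coord; case: (0 < a)%N; case: (0 < b)%N; case: (0 < c)%N;
  case: px; case: py; case: pz; apply/val_inj.
Qed.

Section NormalFormCoordinate.
Variables (n : nat) (mt : mon (3 * n)).
Local Notation M := (mon (3 * n)).
Local Open Scope ring_scope.

Definition coord_at (u : M) i := block_coord (expo mt kx i) (expo mt ky i) (expo mt kz i)
  (0 < expo u kx i)%N (0 < expo u ky i)%N (0 < expo u kz i)%N.

(* For mt with at most one variable per block: the coefficient of mt in the normal form
   of u modulo (S_n, L_n). *)
Definition nf_coord (u : M) : 'F_2 := \prod_(i < n) (coord_at u i)%:R.

Lemma nf_coord_shift_block i0 (t s : M) : (forall c i, i != i0 -> expo s c i = 0%N) ->
  nf_coord (madd t s) = (coord_at (madd t s) i0)%:R * \prod_(i < n | i != i0) (coord_at t i)%:R.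
Proof.
move=> s_i0; rewrite /nf_coord (bigD1 i0) //=; congr (_ * _).
by apply: eq_bigr => i neq_i; rewrite /coord_at !expo_madd !s_i0 // !addn0.
Qed.

Lemma nf_coord_sq0 c i0 (t : M) :
  nf_coord (madd t (madd (mvar c i0) (mvar c i0))) + nf_coord (madd t (mvar c i0)) = 0.
Proof.
have in_i0 s : s \in [:: madd (mvar c i0) (mvar c i0); mvar c i0] ->
    forall c' i, i != i0 -> expo s c' i = 0%N.
  by rewrite !inE => /orP [] /eqP -> c' i /negbTE neq_i; rewrite ?expo_madd expo_mvar neq_i andbF.
rewrite (nf_coord_shift_block t (in_i0 _ (mem_head _ _))).
rewrite (nf_coord_shift_block t (in_i0 _ (mem_last _ _))) -mulrDl.
suff -> : coord_at (madd t (madd (mvar c i0) (mvar c i0))) i0 = coord_at (madd t (mvar c i0)) i0.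
  by rewrite F2_addxx mul0r.
have pos2 x (b : bool) : (0 < x + (b + b))%N = (0 < x + b)%N.
  by case: b; rewrite ?addn0 // addn2 addn1.
by rewrite /coord_at !expo_madd !expo_mvar !eqxx !andbT !pos2.
Qed.

Lemma nf_coord_L0 i0 (t : M) :
  \sum_(s <- [:: madd (mvar kx i0) (mvar ky i0); mvar kx i0; mvar ky i0; mvar kz i0])
    nf_coord (madd t s) = 0.
Proof.
set hs := [:: _; _; _; _]; have in_i0 s : s \in hs -> forall c i, i != i0 -> expo s c i = 0%N.
  by rewrite !inE => /or4P [] /eqP -> c i /negbTE neq_i; rewrite ?expo_madd !expo_mvar neq_i !andbF.
rewrite big_seq (eq_bigr _ (fun s hs_s => nf_coord_shift_block t (in_i0 s hs_s))) -big_seq.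
rewrite -big_distrl /= !big_cons big_nil addr0 /coord_at !expo_madd !expo_mvar !eqxx /=.
by rewrite !addn0 !addn1 !addrA block_coord_L mul0r.
Qed.

Lemma nf_coord_zprod0 (t : M) : (exists i, bdeg mt i = 0%N) -> nf_coord (madd t (zprod n)) = 0.
Proof.
move=> [i0 mt_i0]; rewrite /nf_coord (bigD1 i0) //=.
suff -> : coord_at (madd t (zprod n)) i0 = false by rewrite mul0r.
move: mt_i0; rewrite /bdeg /coord_at => mt_i0.
have [-> -> ->] : [/\ expo mt kx i0 = 0%N, expo mt ky i0 = 0%N & expo mt kz i0 = 0%N] by split; lia.
by rewrite /block_coord /= !expo_madd !expo_zprod addn1 andbF.
Qed.

Hypothesis mt_block : forall i, (bdeg mt i <= 1)%N.

Lemma nf_coord_self : nf_coord mt = 1.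
Proof. by rewrite /nf_coord big1 // => i _; rewrite /coord_at (block_coord_self (mt_block i)). Qed.

Lemma nf_coord_support u : nf_coord u != 0 -> (mdeg u <= mdeg mt)%N -> u = mt.
Proof.
move=> /prodf_neq0 coord_u le_deg.
have u_i i : coord_at u i by have := coord_u i isT; case: coord_at.
have deg_i i := block_coord_support (mt_block i) (u_i i).
rewrite !mdeg_bdeg in le_deg.
have eq_i i : bdeg u i = bdeg mt i.
  apply/anti_leq/andP; split; last exact: (deg_i i).1.
  rewrite leqNgt; apply/negP => lt_i; move: le_deg; apply/negP; rewrite -ltnNge.
  rewrite (bigD1 i) //= [X in (_ < X)%N](bigD1 i) //= -addSn leq_add //.
  by apply: leq_sum => j _; exact: (deg_i j).1.
apply: monP => c i; have [ex ey ez] := (deg_i i).2 (eq_leq (eq_i i)).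
by case: (I3_cases c) => ->.
Qed.

End NormalFormCoordinate.

Definition standard n (m : mon (3 * n)) := (forall i, bdeg m i <= 1)%N /\ exists i, bdeg m i = 0%N.

Lemma standard_not_lm n (le : rel (mon (3 * n))) mt : total_degree le -> standard mt ->
  forall g, in_ideal (Hn n) g -> ~ is_lm le g mt.
Proof.
move=> tdeg [mt_block mt_empty]; rewrite Hn_psum.
apply: (not_lm_of_annihilator _ tdeg (nf_coord_self mt_block) (nf_coord_support mt_block)).
move=> hs t /Hn_termsP [[c [i ->]]|[i ->]|->].
- by rewrite big_cons big_seq1 nf_coord_sq0.
- exact: nf_coord_L0.
- by rewrite big_seq1 nf_coord_zprod0.
Qed.

Section PickMonomials.
Variable n : nat.
Local Notation M := (mon (3 * n)).
Local Open Scope ring_scope.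

Definition ideal_cong (a b : M) := in_ideal (Hn n) (psum [:: a; b]).

Lemma ideal_cong_refl a : ideal_cong a a.
Proof. by apply: in_ideal_ext (in_ideal0 _) => m; rewrite !psum_cons /psum addr0 F2_addxx. Qed.

Lemma ideal_cong_trans a b c : ideal_cong a b -> ideal_cong b c -> ideal_cong a c.
Proof.
move=> ab bc; apply: in_ideal_ext (in_idealD ab bc) => m.
by rewrite !psum_cons /psum !addr0; case: (a == m); case: (b == m); case: (c == m); apply/val_inj.
Qed.

Lemma ideal_cong_mul t a b : ideal_cong a b -> ideal_cong (madd t a) (madd t b).
Proof. by move=> ab; apply: in_ideal_ext (in_idealM t ab) => m; rewrite pmulm_psum. Qed.

Lemma ideal_cong_big (r : seq 'I_n) (F G : 'I_n -> M) : (forall i, ideal_cong (F i) (G i)) ->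
  ideal_cong (\big[@madd _/mone _]_(i <- r) F i) (\big[@madd _/mone _]_(i <- r) G i).
Proof.
move=> FG; elim: r => [|i r IH]; first by rewrite !big_nil; exact: ideal_cong_refl.
rewrite !big_cons; apply: (ideal_cong_trans (b := madd (G i) (\big[@madd _/mone _]_(j <- r) F j))).
  by rewrite maddC [madd (G i) _]maddC; exact: ideal_cong_mul.
exact: ideal_cong_mul.
Qed.

Lemma ideal_cong_var_z c i : ideal_cong (mvar c i) (madd (mvar c i) (mvar kz i)).
Proof.
have swap a b : in_ideal (Hn n) (psum [:: b; a]) -> ideal_cong a b.
  by move=> ba; apply: in_ideal_ext ba => m; rewrite !psum_cons addrCA.
case: (I3_cases c) => ->; apply: swap; [exact: in_ideal_xz|exact: in_ideal_yz|exact: in_ideal_sq].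
Qed.

Definition pick_mon (w : {ffun 'I_n -> 'I_3}) : M := \big[@madd _/mone _]_(i < n) mvar (w i) i.

Lemma expo_pick_mon w c i : expo (pick_mon w) c i = (c == w i).
Proof.
rewrite /pick_mon expo_big (bigD1 i) //= big1 ?addn0 => [|j /negbTE neq_ji].
  by rewrite expo_mvar eqxx andbT.
by rewrite expo_mvar [i == j]eq_sym neq_ji andbF.
Qed.

(* Multiplying every variable of pick_mon w by the z of its block does not change its class,
   and turns it into a multiple of z_1 ... z_n. *)
Lemma in_ideal_pick_mon w : in_ideal (Hn n) (psum [:: pick_mon w]).
Proof.
pose Q := \big[@madd _/mone _]_(i < n) madd (mvar (w i) i) (mvar kz i).
have PQ : ideal_cong (pick_mon w) Q by apply: ideal_cong_big => i; exact: ideal_cong_var_z.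
have EQ : Q = madd (pick_mon w) (zprod n).
  apply: monP => c i; rewrite expo_madd /Q /pick_mon /zprod !expo_big -big_split /=.
  by apply: eq_bigr => j _; rewrite expo_madd mz_mvar.
rewrite EQ in PQ; move/(in_idealD PQ): (in_idealM (pick_mon w) (in_ideal_zprod n)).
apply: in_ideal_ext => m.
by rewrite pmulm_psum !psum_cons /psum !addr0 -addrA F2_addxx addr0.
Qed.

End PickMonomials.

Definition quad_kinds : seq ('I_3 * 'I_3) :=
  [:: (kx, kx); (ky, ky); (kz, kz); (kx, ky); (kx, kz); (ky, kz)].
Definition quad (j : 'I_6) : 'I_3 * 'I_3 := nth (kx, kx) quad_kinds j.

Lemma quad_sorted j : ((quad j).1 <= (quad j).2)%N.
Proof. by case: j => [[|[|[|[|[|[|j]]]]]] lt_j6]. Qed.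

Lemma quad_inj : injective quad.
Proof. by move=> j j' /eqP; rewrite nth_uniq // => /eqP /val_inj. Qed.

Section LeadMonomials.
Variable n : nat.
Hypothesis n_gt1 : (1 < n)%N.
Local Notation M := (mon (3 * n)).
Local Open Scope ring_scope.

Definition lead_index := ('I_6 * 'I_n + {ffun 'I_n -> 'I_3})%type.

Definition lead_mon (t : lead_index) : M :=
  match t with
  | inl (j, i) => madd (mvar (quad j).1 i) (mvar (quad j).2 i)
  | inr w => pick_mon w
  end.

Lemma card_lead_index : #|{: lead_index}| = (6 * n + 3 ^ n)%N.
Proof. by rewrite card_sum card_prod card_ffun !card_ord. Qed.

Lemma other_block i : exists i1 : 'I_n, i1 != i.
Proof.
have n_gt0 : (0 < n)%N by apply: ltnW.
case: (eqVneq (val i) 0%N) => i0; first by exists (Ordinal n_gt1); rewrite -val_eqE /= i0.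
by exists (Ordinal n_gt0); rewrite -val_eqE /= eq_sym.
Qed.

Lemma madd_mvar_inj (a b a' b' : 'I_3) (i i' : 'I_n) : (a <= b)%N -> (a' <= b')%N ->
  madd (mvar a i) (mvar b i) = madd (mvar a' i') (mvar b' i') -> [/\ a = a', b = b' & i = i'].
Proof.
move=> le_ab le_ab' eq_m; have expo_eq c j := congr1 (fun m => expo m c j) eq_m.
case: (eqVneq i i') => [eq_i|neq_i]; last first.
  by move: (expo_eq a i); rewrite /= !expo_madd !expo_mvar !eqxx (negbTE neq_i) !andbF /=; lia.
subst i'; move: (expo_eq kx i) (expo_eq ky i) (expo_eq kz i) le_ab le_ab'.
rewrite /= !expo_madd !expo_mvar !eqxx !andbT.
by case: (I3_cases a) => ->; case: (I3_cases b) => ->; case: (I3_cases a') => ->;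
  case: (I3_cases b') => -> //=; lia.
Qed.

Lemma lead_mon_inj : injective lead_mon.
Proof.
have quad_neq_pick j (i : 'I_n) (w : {ffun 'I_n -> 'I_3}) :
    madd (mvar (quad j).1 i) (mvar (quad j).2 i) <> pick_mon w.
  move=> eq_m; have [i1 neq_i1] := other_block i.
  have := congr1 (fun m => bdeg m i1) eq_m.
  rewrite /bdeg /= !expo_madd !expo_mvar !expo_pick_mon (negbTE neq_i1) !andbF.
  by case: (I3_cases (w i1)) => ->.
case=> [[j i]|w] [[j' i']|w'] /= eq_m.
- have [eq1 eq2 ->] := madd_mvar_inj (quad_sorted j) (quad_sorted j') eq_m.
  by rewrite (@quad_inj j j') // [quad j]surjective_pairing eq1 eq2 -surjective_pairing.
- by case: (quad_neq_pick _ _ _ eq_m).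
- by case: (quad_neq_pick _ _ _ (esym eq_m)).
- congr inr; apply/ffunP => i; have := congr1 (fun m => expo m (w i) i) eq_m.
  by rewrite /= !expo_pick_mon eqxx; case: eqP.
Qed.

Lemma lead_mon_lm (le : rel M) : admissible le -> total_degree le ->
  forall t, exists f, in_ideal (Hn n) f /\ is_lm le f (lead_mon t).
Proof.
move=> [[refl _ _ tot] _] tdeg [[j i]|w] /=; last first.
  exists (psum [:: pick_mon w]); split; first exact: in_ideal_pick_mon.
  by apply: lm_psum_cons => // u; rewrite in_nil.
have ex_lm h L : in_ideal (Hn n) (psum (h :: L)) -> mdeg h = 2%N ->
    all (fun u => mdeg u == 1%N) L -> exists f, in_ideal (Hn n) f /\ is_lm le f h.
  move=> h_in deg_h /allP L1; exists (psum (h :: L)); split => //.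
  by apply: lm_psum_cons => // u /L1 /eqP ->; rewrite deg_h.
case: j => [[|[|[|[|[|[|j]]]]]] lt_j6] //; rewrite /quad /=;
  first [ apply: ex_lm (in_ideal_sq _ _) _ _ | apply: ex_lm (in_ideal_L _) _ _
        | apply: ex_lm (in_ideal_xz _) _ _ | apply: ex_lm (in_ideal_yz _) _ _ ];
  by rewrite /= ?mdeg_madd ?mdeg_munit.
Qed.

Lemma proper_div_quad_standard (a b : 'I_3) i0 (m : M) :
  mdiv m (madd (mvar a i0) (mvar b i0)) -> m != madd (mvar a i0) (mvar b i0) -> standard m.
Proof.
set P := madd _ _; move=> /mdivP dvd neq_P.
have off_i0 i c : i != i0 -> expo m c i = 0%N.
  by move=> /negbTE neq_i; move: (dvd c i); rewrite /P expo_madd !expo_mvar neq_i !andbF; lia.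
have [i1 neq_i1] := other_block i0.
split; last by exists i1; rewrite /bdeg !off_i0.
move=> i; case: (eqVneq i i0) => [->|neq_i]; last by rewrite /bdeg !off_i0.
rewrite leqNgt; apply/negP => gt1; case/negP: neq_P; apply/eqP/monP => c i2.
case: (eqVneq i2 i0) => [->|neq_i2]; last first.
  by rewrite off_i0 // /P expo_madd !expo_mvar (negbTE neq_i2) !andbF.
move: (dvd kx i0) (dvd ky i0) (dvd kz i0) gt1; rewrite /bdeg /P !expo_madd !expo_mvar !eqxx !andbT.
by case: (I3_cases a) => ->; case: (I3_cases b) => ->; case: (I3_cases c) => -> /=; lia.
Qed.

Lemma proper_div_pick_standard w (m : M) : mdiv m (pick_mon w) -> m != pick_mon w -> standard m.
Proof.
move=> /mdivP dvd neq_m.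
have le_w c i : (expo m c i <= (c == w i))%N by rewrite -expo_pick_mon.
have le1 i : (bdeg m i <= 1)%N.
  by move: (le_w kx i) (le_w ky i) (le_w kz i); rewrite /bdeg; case: (I3_cases (w i)) => -> /=; lia.
split => //; case: (boolP [exists i, bdeg m i == 0%N]) => [/existsP [i /eqP]|/existsPn full].
  by exists i.
case/negP: neq_m; apply/eqP/monP => c i; rewrite expo_pick_mon.
move: (full i) (le_w kx i) (le_w ky i) (le_w kz i); rewrite /bdeg.
by case: (I3_cases (w i)) => ->; case: (I3_cases c) => -> /=; lia.
Qed.

Lemma proper_div_lead_standard t (m : M) : mdiv m (lead_mon t) -> m != lead_mon t -> standard m.
Proof.
by case: t => [[j i]|w]; [exact: proper_div_quad_standard|exact: proper_div_pick_standard].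
Qed.

Lemma groebner_at_least (le : rel M) : admissible le -> total_degree le ->
  forall G, is_groebner le (Hn n) G -> at_least (6 * n + 3 ^ n) G.
Proof.
move=> adm tdeg G gb; rewrite -card_lead_index.
have [[_ _ anti _] _] := adm; apply: (at_least_lms anti lead_mon_inj) => t.
have [f [Ff lm_f]] := lead_mon_lm adm tdeg t.
apply: (groebner_lm_mem gb Ff lm_f) => m dvd neq_m.
exact: standard_not_lm tdeg (proper_div_lead_standard dvd neq_m).
Qed.

End LeadMonomials.

Section GeneratorFacts.
Variable n : nat.
Hypothesis n_gt1 : (1 < n)%N.
Local Notation M := (mon (3 * n)).
Local Open Scope ring_scope.

Lemma Hn_terms_head hs : hs \in Hn_terms n ->
  exists h L, hs = h :: L /\ forall u, u \in L -> (mdeg u < mdeg h)%N.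
Proof.
case/Hn_termsP => [[c [i ->]]|[i ->]|->]; do 2?eexists; split; try reflexivity.
- by move=> u; rewrite inE => /eqP ->; rewrite mdeg_madd !mdeg_munit.
- by move=> u; rewrite !inE => /or3P [] /eqP ->; rewrite mdeg_madd !mdeg_munit.
- by move=> u; rewrite in_nil.
Qed.

Definition Hn_leads : seq (lead_index n) :=
  [seq inl (j, i) | j <- [:: @Ordinal 6 0 isT; @Ordinal 6 1 isT; @Ordinal 6 2 isT;
                              @Ordinal 6 3 isT], i <- enum 'I_n] ++ [:: inr [ffun => kz]].

Lemma Hn_leads_uniq : uniq Hn_leads.
Proof.
rewrite cat_uniq; apply/and3P; split => //.
  apply: allpairs_uniq => //; first exact: enum_uniq.
  by move=> [j i] [j' i'] _ _ /= [-> ->].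
by rewrite has_seq1; apply/negP => /allpairsP [[j i] []].
Qed.

Lemma Hn_heads : map (head (mone _)) (Hn_terms n) = map (@lead_mon n) Hn_leads.
Proof.
rewrite /Hn_terms /Hn_leads /vars !map_cat -!map_comp /= cats0 -!catA.
have -> : zprod n = pick_mon [ffun => kz].
  by rewrite /zprod /pick_mon; apply: eq_bigr => i _; rewrite mz_mvar ffunE.
by congr (_ ++ (_ ++ (_ ++ (_ ++ _)))); apply: eq_map => i /=;
  rewrite /quad /= ?mx_mvar ?my_mvar ?mz_mvar.
Qed.

Lemma Hn_inj : injective (fun i : 'I_(size (Hn n)) => nth (pzero (3 * n)) (Hn n) i).
Proof.
have size_terms : size (Hn_terms n) = size (Hn n) by rewrite Hn_psum size_map.
move=> i j /= eq_ij.
have [lt_i lt_j] : (i < size (Hn_terms n))%N /\ (j < size (Hn_terms n))%N by rewrite size_terms.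
have [hi [Li [def_i lt_Li]]] := Hn_terms_head (mem_nth [::] lt_i).
have [hj [Lj [def_j lt_Lj]]] := Hn_terms_head (mem_nth [::] lt_j).
have eq_h : hi = hj.
  apply: psum_head_inj lt_Li lt_Lj _ => m.
  by rewrite -def_i -def_j -!(nth_map [::] (pzero _)) // -Hn_psum eq_ij.
have heads_uniq : uniq (map (head (mone _)) (Hn_terms n)).
  by rewrite Hn_heads (map_inj_uniq (lead_mon_inj n_gt1)) Hn_leads_uniq.
apply/val_inj/eqP; rewrite -(nth_uniq (mone _) _ _ heads_uniq) ?size_map //.
by rewrite !(nth_map [::]) // def_i def_j eq_h.
Qed.

Lemma Hn_shape p : pin p (Hn n) ->
  [/\ deg_le p (maxn n 2), terms_le p 4 & forall m, p m = 0 \/ p m = 1].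
Proof.
move=> [i <-]; have : (i < size (Hn_terms n))%N by rewrite -(size_map (@psum _)) -Hn_psum.
move: (nat_of_ord i) => {}i lt_i; rewrite Hn_psum (nth_map [::]) //.
have hs_in := mem_nth [::] lt_i.
split; last by move=> m; exact: F2_01.
- move=> m /psum_neq0_mem; case/Hn_termsP: hs_in => [[c [i0 ->]]|[i0 ->]|->].
  + by rewrite !inE => /orP [] /eqP ->; rewrite ?mdeg_madd !mdeg_munit leq_max; lia.
  + by rewrite !inE => /or4P [] /eqP ->; rewrite ?mdeg_madd !mdeg_munit leq_max; lia.
  + by rewrite inE => /eqP ->; rewrite mdeg_zprod leq_maxl.
- exists (nth [::] (Hn_terms n) i); split; last by move=> m /psum_neq0_mem.
  by case/Hn_termsP: hs_in => [[c [i0 ->]]|[i0 ->]|->].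
Qed.

End GeneratorFacts.

Theorem mainTheorem5 (n : nat) (hn : (1 < n)%N) :
  [/\ size (Hn n) = (4 * n + 1)%N,
      injective (fun i : 'I_(size (Hn n)) => nth (pzero (3 * n)) (Hn n) i),
      (forall p, pin p (Hn n) ->
         [/\ deg_le p (maxn n 2), terms_le p 4
           & forall m, p m = 0%R \/ p m = 1%R]),
      (forall s, pin s (Sn n) -> pin s (Hn n))
    & (forall le : rel (mon (3 * n)), admissible le -> total_degree le ->
         forall G : seq (mpoly (3 * n)), is_groebner le (Hn n) G ->
           at_least (6 * n + 3 ^ n) G)].
Proof.
split.
- exact: size_Hn.
- exact: Hn_inj.
- exact: Hn_shape.
- move=> s [i <-]; have lt_i : (i < size (Hn n))%N by rewrite /Hn size_cat ltn_addr.
  by exists (Ordinal lt_i); rewrite /= /Hn nth_cat ltn_ord.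
- exact: groebner_at_least.
Qed.
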